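(* Let $\mathbb{N}$ be the natural numbers with the usual order and $\Sigma\mathbb{N}$ its Scott space (whose nonempty open sets are exactly the sets ${\uparrow}k$, $k\in\mathbb{N}$). Then $\Sigma\mathbb{N}$ is $S^{\ast}$-well-filtered but not well-filtered (hence not strongly well-filtered).
   Context: All spaces are $T_0$. The specialization order of $X$ is given by $x\le y$ iff $x\in cl(\{y\})$; ${\uparrow}$ is taken with respect to it; a subset is saturated if it is an upper set in the specialization order. $K(X)$ denotes the set of all nonempty compact saturated subsets of $X$; a family in $K(X)$ is filtered if any two members contain a common member. $X$ is well-filtered if for every filtered family $\{K_i\}\subseteq K(X)$ and every open $U$, $\bigcap_i K_i\subseteq U$ implies $K_i\subseteq U$ for some $i$. $X$ is strongly well-filtered if for every filtered $\{K_i\mid i\in I\}\subseteq K(X)$, every $G\in K(X)$ and every open $U$, $\bigcap_i K_i\cap G\subseteq U$ implies $K_i\cap G\subseteq U$ for some $i$. $X$ is $S^{\ast}$-well-filtered if this last implication holds for every nonempty open $U$. *)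

From HB Require Import structures.
From mathcomp Require Import all_boot all_order.
From mathcomp Require Import all_classical.
From mathcomp Require Import topology.
Set Implicit Arguments. Unset Strict Implicit. Unset Printing Implicit Defensive.
Local Open Scope classical_set_scope.

Definition spec_le {X : topologicalType} (x y : X) : Prop :=
  closure [set y] x.

Definition saturated {X : topologicalType} (A : set X) : Prop :=
  forall x y : X, A x -> spec_le x y -> A y.

Definition KX {X : topologicalType} (K : set X) : Prop :=
  [/\ K !=set0, compact K & saturated K].

Definition filtered_KX {X : topologicalType} (F : set (set X)) : Prop :=
  [/\ F `<=` KX, F !=set0 &
      forall A B, F A -> F B -> exists2 C, F C & C `<=` A `&` B].

Definition well_filtered (X : topologicalType) : Prop :=
  forall (F : set (set X)) (U : set X), filtered_KX F -> open U ->
    \bigcap_(A in F) A `<=` U -> exists2 A, F A & A `<=` U.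

Definition strongly_well_filtered (X : topologicalType) : Prop :=
  forall (F : set (set X)) (G U : set X), filtered_KX F -> KX G -> open U ->
    (\bigcap_(A in F) A) `&` G `<=` U -> exists2 A, F A & A `&` G `<=` U.

Definition S_star_well_filtered (X : topologicalType) : Prop :=
  forall (F : set (set X)) (G U : set X), filtered_KX F -> KX G -> open U ->
    U !=set0 ->
    (\bigcap_(A in F) A) `&` G `<=` U -> exists2 A, F A & A `&` G `<=` U.

Definition is_sup_nat (D : set nat) (s : nat) : Prop :=
  (forall d, D d -> (d <= s)%N) /\
  (forall t, (forall d, D d -> (d <= t)%N) -> (s <= t)%N).

Definition directed_nat (D : set nat) : Prop :=
  D !=set0 /\ forall a b, D a -> D b -> exists2 c, D c & (a <= c)%N && (b <= c)%N.

Definition scott_open_nat (U : set nat) : Prop :=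
  (forall x y, U x -> (x <= y)%N -> U y) /\
  (forall D s, directed_nat D -> is_sup_nat D s -> U s -> D `&` U !=set0).

Lemma scott_openT : scott_open_nat setT.
Proof.
split=> // D s [[d Dd] _] _ _; by exists d.
Qed.

Lemma scott_openI : setI_closed scott_open_nat.
Proof.
move=> U V [uU iU] [uV iV]; split.
  by move=> x y [Ux Vx] xy; split; [exact: uU Ux xy|exact: uV Vx xy].
move=> D s dirD supD [Us Vs].
have [d1 [Dd1 Ud1]] := iU D s dirD supD Us.
have [d2 [Dd2 Vd2]] := iV D s dirD supD Vs.
have [c Dc /andP[h1 h2]] := dirD.2 _ _ Dd1 Dd2.
exists c; split=> //; split; [exact: uU Ud1 h1|exact: uV Vd2 h2].
Qed.

Lemma scott_open_bigU (I : Type) (f : I -> set nat) :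
  (forall i, scott_open_nat (f i)) -> scott_open_nat (\bigcup_i f i).
Proof.
move=> hf; split.
  by move=> x y [i _ fxi] xy; exists i => //; exact: (hf i).1 _ _ fxi xy.
move=> D s dirD supD [i _ fis].
have [d [Dd fid]] := (hf i).2 D s dirD supD fis.
by exists d; split=> //; exists i.
Qed.

Definition scottN : Type := nat.
HB.instance Definition _ := Choice.on scottN.
HB.instance Definition _ := isOpenTopological.Build scottN
  scott_openT scott_openI scott_open_bigU.

From mathcomp Require Import all_boot all_order all_classical topology.

(* In the Scott space of nat every nonempty saturated set is a principal upper
   set [up n], so a filtered family in K(Sigma N) is a chain of sets [up n].
   Either its indices are unbounded, and some member lies inside any given
   [up u], or they are bounded, and the member with the largest index is the
   intersection of the whole family.  Either way a nonempty open set [U],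
   which contains some [up u], swallows [A `&` G] for some member [A].  The
   empty open set is the exception: the family of all [up n] has empty
   intersection but no empty member, so well-filteredness fails. *)

Local Open Scope classical_set_scope.

Definition up (n : nat) : set scottN := [set x | (n <= x)%N].

Lemma up_open n : open (up n).
Proof.
split=> [x y /= nx xy|D s [[d0 Dd0] _] [_ lub] /= ns]; first exact: leq_trans nx xy.
apply: contrapT => noD.
have Dlt d : D d -> (d < n)%N.
  by move=> Dd; rewrite ltnNge; apply/negP => nd; apply: noD; exists d.
case: n ns Dlt {noD} => [|n] ns Dlt; first by have := Dlt _ Dd0.
have : (s <= n)%N by apply: lub => d /Dlt.
by rewrite leqNgt ns.
Qed.

Lemma open_upper (U : set scottN) x y : open U -> U x -> (x <= y)%N -> U y.
Proof. by case=> upU _; exact: upU. Qed.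

Lemma nbhs_up (x : scottN) B : nbhs x B -> up x `<=` B.
Proof.
rewrite nbhsE => -[V [oV Vx] VB] y xy; apply: VB.
exact: open_upper oV Vx xy.
Qed.

Lemma spec_leE (x y : scottN) : spec_le x y <-> (x <= y)%N.
Proof.
split=> [xy|xy B /nbhs_up upB]; last by exists y; split=> //; exact: upB.
have [z [/= -> //]] := xy (up x) (open_nbhs_nbhs (conj (up_open x) (leqnn x))).
Qed.

Lemma subset_upE m n : up m `<=` up n <-> (n <= m)%N.
Proof.
split=> [/(_ m (leqnn m))//|nm x /= mx]; exact: leq_trans nm mx.
Qed.

Lemma saturated_upE (A : set scottN) :
  saturated A -> A !=set0 -> exists n, A = up n.
Proof.
move=> satA [a Aa].
have exA : exists m, `[< A m >] by exists a; exact/asboolP.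
case: (ex_minnP exA) => m /asboolP Am minA; exists m.
apply/seteqP; split=> [x Ax|x mx]; first exact/minA/asboolP.
exact: satA Am (proj2 (spec_leE _ _) mx).
Qed.

Lemma KX_upE (K : set scottN) : KX K -> exists n, K = up n.
Proof. by case=> K0 _ satK; exact: saturated_upE. Qed.

Lemma KX_up n : KX (up n).
Proof.
split; first by exists n; rewrite /up /=.
- move=> F PF Fn; exists n; split; first exact: leqnn.
  move=> B C FB /nbhs_up upC.
  have [z [Bz nz]] := filter_ex (filterI FB Fn).
  by exists z; split=> //; exact: upC.
- by move=> x y /= nx /spec_leE xy; exact: leq_trans nx xy.
Qed.

Lemma filtered_KX_dichotomy {F : set (set scottN)} : filtered_KX F ->
  (forall u, exists2 A, F A & A `<=` up u) \/
  (exists2 A, F A & A `<=` \bigcap_(B in F) B).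
Proof.
move=> [FK [A0 FA0] Ffilt].
pose Q k := `[< exists2 A, F A & A `<=` up k >].
have [[u notQu]|unbounded] :=
  pselect (exists u, ~ exists2 A, F A & A `<=` up u); last first.
  by left=> u; apply: contrapT => notQu; apply: unbounded; exists u.
right.
have Qbound k : Q k -> (k <= u)%N.
  move=> /asboolP [A FA Ak]; rewrite leqNgt; apply/negP => uk.
  by apply: notQu; exists A => // x /Ak /= kx; exact: leq_trans (ltnW uk) kx.
have Q0 : exists k, Q k by exists 0; apply/asboolP; exists A0 => // x.
case: (ex_maxnP Q0 Qbound) => k /asboolP [A FA Ak] kmax.
exists A => // x Ax B FB.
have [C FC CAB] := Ffilt _ _ FA FB.
have [a Aa] := @KX_upE A (FK A FA); have [c Cc] := @KX_upE C (FK C FC).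
have ck : (c <= k)%N by apply/kmax/asboolP; exists C => //; rewrite Cc.
have ka : (k <= a)%N by apply/subset_upE; rewrite -Aa.
have AC : A `<=` C by rewrite Aa Cc; apply/subset_upE; exact: leq_trans ck ka.
by have [] := CAB _ (AC _ Ax).
Qed.

Lemma S_star_well_filtered_scottN : S_star_well_filtered scottN.
Proof.
move=> F G U filtF _ oU [u Uu] capU.
have upU : up u `<=` U by move=> x; exact: open_upper oU Uu.
have [/(_ u) [A FA Au]|[A FA Acap]] := filtered_KX_dichotomy filtF.
  by exists A => // x [/Au /upU].
by exists A => // x [/Acap Fx Gx]; exact: capU.
Qed.

Definition up_family : set (set scottN) := range up.

Lemma up_family_filtered : filtered_KX up_family.
Proof.
split; first by move=> _ [n _ <-]; exact: KX_up.
  by exists (up 0); exists 0.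
move=> _ _ [a _ <-] [b _ <-]; exists (up (maxn a b)); first by exists (maxn a b).
by move=> x /= abx; split; apply: leq_trans abx; rewrite ?leq_maxl ?leq_maxr.
Qed.

Lemma up_family_bigcap : \bigcap_(A in up_family) A = set0.
Proof.
apply/seteqP; split=> // x /(_ (up x.+1) (ex_intro2 _ _ x.+1 I erefl)).
by rewrite /up /= ltnn.
Qed.

Lemma not_well_filtered_scottN : ~ well_filtered scottN.
Proof.
move=> wf.
have cap0 : \bigcap_(A in up_family) A `<=` set0 by rewrite up_family_bigcap.
have [_ [n _ <-]] := wf _ set0 up_family_filtered open0 cap0.
by move/(_ n (leqnn n)).
Qed.

Lemma strongly_well_filtered_well_filtered {X : topologicalType} :
  KX (@setT X) -> strongly_well_filtered X -> well_filtered X.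
Proof.
move=> KT swf F U filtF oU capU.
have [A FA AU] := swf F setT U filtF KT oU (fun x '(conj Fx _) => capU x Fx).
by exists A => // x Ax; apply: AU.
Qed.

Theorem mainTheorem9 :
  S_star_well_filtered scottN /\
  ~ well_filtered scottN /\ ~ strongly_well_filtered scottN.
Proof.
have KT : KX (@setT scottN).
  by rewrite (_ : setT = up 0); [exact: KX_up|apply/seteqP; split].
split; first exact: S_star_well_filtered_scottN.
split; first exact: not_well_filtered_scottN.
by move/(strongly_well_filtered_well_filtered KT); exact: not_well_filtered_scottN.
Qed.
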